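(* Let $z_0\in\mathbb{Z}_{\ge0}$, $z\in\mathbb{Z}_{>0}$, and $x,y\in[0,1)$ with $x<y$. Then $$\left|\frac{\big|\Phi[z_0,z_0+z)\cap[x,y)\big|}{z}-(y-x)\right|<\frac{2\lfloor\lg z\rfloor+2}{z}.$$
   Context: $\lg=\log_2$. The van der Corput function $\psi:\mathbb{Z}_{\ge0}\to[0,1)$ is $\psi(0)=0$ and, for $i>0$ written in binary as $i=\sum_{j=0}^{\lfloor\lg i\rfloor}\beta_j(i)2^j$ with $\beta_j(i)\in\{0,1\}$, $\psi(i)=\sum_{j}\beta_j(i)2^{-(j+1)}$. For integers $0\le z<z'$, $\Phi[z,z')=\{\psi(i): i\in\{z,z+1,\dots,z'-1\}\}$. *)

From Stdlib Require Import Reals Lra Lia Arith List.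
Open Scope R_scope.

(* lg = log2; floor(lg i) for i>0 is Nat.log2 i. *)
Definition beta (j i : nat) : R := if Nat.testbit i j then 1 else 0.

Definition psi (i : nat) : R :=
  match i with
  | O => 0
  | S _ => sum_f_R0 (fun j => beta j i * / 2 ^ (S j)) (Nat.log2 i)
  end.

Definition Phi (z z' : nat) (r : R) : Prop :=
  exists i : nat, (z <= i)%nat /\ (i < z')%nat /\ r = psi i.

(* l enumerates (without repetition) exactly the finite set A; then
   |A| = length l. *)
Definition enumerates (A : R -> Prop) (l : list R) : Prop :=
  NoDup l /\ forall r, In r l <-> A r.

From Stdlib Require Import Reals Lra Lia Arith List.
Open Scope R_scope.

(* The proof has three layers.
   1. Binary recursion for psi: psi (2i + b) = b/2 + psi i / 2.  From it we get
      0 <= psi < 1, injectivity of psi, and the shift rule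
      psi (m 2^k + r) = psi r + psi m / 2^k for r < 2^k.
   2. Aligned blocks: by induction on k, for 0 <= c < 1 the number of r < 2^k
      with psi r + c/2^k < t lies in [2^k t - c, 2^k t - c + 1) when
      0 <= t <= 1.  Subtracting two such counts, the discrepancy
      D a n = #{a <= i < a+n : psi i in [x,y)} - n (y - x) satisfies
      |D (m 2^k) (2^k)| < 1.
   3. Dyadic decomposition: for any function D additive on concatenated index
      windows and bounded by 1 on aligned dyadic blocks, |D a n| <= k for a
      window of length n < 2^k that starts or ends at a multiple of 2^k; cutting
      an arbitrary window at a multiple of 2^(lg n) gives |D a n| < 2 lg n + 2.
   The theorem follows by identifying the enumerated set with the list of psi i
   over the counted indices and dividing by z. *)

(* * Binary recursion for the van der Corput function *)

Definition digit_sum (N i : nat) : R := sum_f_R0 (fun j => beta j i * / 2 ^ (S j)) N.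

(* Digits above [lg i] vanish, so truncating later than [lg i] changes nothing. *)
Lemma digit_sum_above_log2 i N :
  (Nat.log2 i <= N)%nat -> digit_sum N i = digit_sum (Nat.log2 i) i.
Proof.
  induction N as [|N IH]; intro HN.
  - now replace (Nat.log2 i) with 0%nat by lia.
  - destruct (Nat.eq_dec (Nat.log2 i) (S N)) as [E|E]; [now rewrite E|].
    change (digit_sum (S N) i)
      with (digit_sum N i + beta (S N) i * / 2 ^ S (S N)).
    rewrite IH by lia. unfold beta. rewrite Nat.bits_above_log2 by lia. lra.
Qed.

Lemma psi_digit_sum i N : (Nat.log2 i <= N)%nat -> psi i = digit_sum N i.
Proof.
  intro HN. rewrite digit_sum_above_log2 by exact HN.
  destruct i as [|i]; [unfold digit_sum, beta; simpl; lra | reflexivity].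
Qed.

(* Appending a low-order bit shifts all other digits one place down. *)
Lemma digit_sum_double N i b :
  digit_sum (S N) (2 * i + Nat.b2n b) = (if b then 1 else 0) / 2 + digit_sum N i / 2.
Proof.
  unfold digit_sum. rewrite decomp_sum by lia. simpl Init.Nat.pred. f_equal.
  - unfold beta. destruct b; simpl Nat.b2n.
    + rewrite Nat.testbit_odd_0. simpl. lra.
    + rewrite Nat.add_0_r, Nat.testbit_even_0. simpl. lra.
  - unfold Rdiv. rewrite Rmult_comm, scal_sum. apply sum_eq. intros j _.
    replace (2 ^ S (S j)) with (2 * 2 ^ S j) by (simpl; ring).
    unfold beta. destruct b; simpl Nat.b2n.
    + rewrite Nat.testbit_odd_succ by lia. rewrite Rinv_mult. ring.
    + rewrite Nat.add_0_r, Nat.testbit_even_succ by lia. rewrite Rinv_mult. ring.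
Qed.

Lemma psi_double i b :
  psi (2 * i + Nat.b2n b) = (if b then 1 else 0) / 2 + psi i / 2.
Proof.
  pose proof (Nat.log2_le_lin i (Nat.le_0_l _)).
  pose proof (Nat.log2_le_lin (2 * i + Nat.b2n b) (Nat.le_0_l _)).
  rewrite (psi_digit_sum (2 * i + Nat.b2n b) (S (2 * i + Nat.b2n b))) by lia.
  rewrite digit_sum_double, <- (psi_digit_sum i) by lia. reflexivity.
Qed.

Lemma psi_even i : psi (2 * i) = psi i / 2.
Proof.
  pose proof (psi_double i false) as E. simpl Nat.b2n in E.
  rewrite Nat.add_0_r in E. rewrite E. lra.
Qed.

Lemma psi_odd i : psi (2 * i + 1) = / 2 + psi i / 2.
Proof. pose proof (psi_double i true) as E. simpl Nat.b2n in E. rewrite E. lra. Qed.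

Lemma psi_bounds i : 0 <= psi i < 1.
Proof.
  induction i as [i IH] using (well_founded_induction lt_wf).
  destruct i as [|i]; [simpl; lra|].
  rewrite (Nat.div2_odd (S i)), psi_double.
  assert (Hlt : (Nat.div2 (S i) < S i)%nat) by (apply Nat.lt_div2; lia).
  specialize (IH _ Hlt). destruct (Nat.odd (S i)); lra.
Qed.

(* Equal values force equal last bits (they decide the half of [0,1)),
   and then equal values at the halved indices. *)
Lemma psi_inj i j : psi i = psi j -> i = j.
Proof.
  remember (i + j)%nat as n eqn:Hn. revert i j Hn.
  induction n as [n IH] using (well_founded_induction lt_wf). intros i j Hn E.
  destruct (Nat.eq_dec n 0) as [->|Hn0]; [lia|].
  rewrite (Nat.div2_odd i), (Nat.div2_odd j) in E |- *.
  rewrite !psi_double in E.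
  pose proof (psi_bounds (Nat.div2 i)). pose proof (psi_bounds (Nat.div2 j)).
  pose proof (Nat.div2_odd i). pose proof (Nat.div2_odd j).
  assert (Hbit : Nat.odd i = Nat.odd j)
    by (destruct (Nat.odd i), (Nat.odd j); auto; lra).
  rewrite Hbit in E |- *. f_equal. f_equal.
  apply (IH (Nat.div2 i + Nat.div2 j)%nat); [|reflexivity|lra].
  destruct (Nat.odd i), (Nat.odd j); simpl Nat.b2n in *; lia.
Qed.

Lemma psi_shift k : forall m r, (r < 2 ^ k)%nat ->
  psi (m * 2 ^ k + r) = psi r + psi m / 2 ^ k.
Proof.
  induction k as [|k IH]; intros m r Hr.
  - simpl in Hr. replace r with 0%nat by lia. simpl.
    rewrite Nat.mul_1_r, Nat.add_0_r. lra.
  - rewrite Nat.pow_succ_r' in Hr |- *. rewrite (Nat.div2_odd r) in Hr |- *.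
    assert (Hr' : (Nat.div2 r < 2 ^ k)%nat)
      by (destruct (Nat.odd r); simpl Nat.b2n in Hr; lia).
    replace (m * (2 * 2 ^ k) + (2 * Nat.div2 r + Nat.b2n (Nat.odd r)))%nat
      with (2 * (m * 2 ^ k + Nat.div2 r) + Nat.b2n (Nat.odd r))%nat by ring.
    rewrite !psi_double, IH by exact Hr'.
    assert (0 < 2 ^ k) by (apply pow_lt; lra).
    simpl pow. field. lra.
Qed.

Fixpoint count_range (P : nat -> bool) (a n : nat) : nat :=
  match n with
  | O => O
  | S n' => (count_range P a n' + (if P (a + n')%nat then 1 else 0))%nat
  end.

Lemma count_range_app P a n1 n2 :
  count_range P a (n1 + n2) = (count_range P a n1 + count_range P (a + n1) n2)%nat.
Proof.
  induction n2 as [|n2 IH]; simpl; [rewrite Nat.add_0_r; lia|].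
  rewrite Nat.add_succ_r. simpl. rewrite IH, Nat.add_assoc. lia.
Qed.

Lemma count_range_reindex P Q a n :
  (forall r, (r < n)%nat -> P (a + r)%nat = Q r) ->
  count_range P a n = count_range Q 0 n.
Proof.
  induction n as [|n IH]; intro H; simpl; [reflexivity|].
  rewrite IH by (intros; apply H; lia). rewrite H by lia. reflexivity.
Qed.

Lemma count_range_parity P n :
  count_range P 0 (2 * n) =
  (count_range (fun r => P (2 * r)%nat) 0 n + count_range (fun r => P (2 * r + 1)%nat) 0 n)%nat.
Proof.
  induction n as [|n IH]; [reflexivity|].
  replace (2 * S n)%nat with (2 * n + 1 + 1)%nat by lia.
  rewrite !count_range_app, IH. simpl. rewrite !Nat.add_0_r.
  replace (n + n + 1)%nat with (2 * n + 1)%nat by lia.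
  replace (n + n)%nat with (2 * n)%nat by lia. lia.
Qed.

Lemma count_range_filter P a n : length (filter P (seq a n)) = count_range P a n.
Proof.
  induction n as [|n IH]; [reflexivity|].
  rewrite seq_S, filter_app, length_app, IH. simpl. now destruct (P (a + n)%nat).
Qed.

Definition below (t v : R) : bool := if Rlt_dec v t then true else false.
Definition in_window (x y v : R) : bool := if Rle_dec x v then below y v else false.

Lemma count_window_split (f : nat -> R) x y a n : x <= y ->
  (count_range (fun r => in_window x y (f r)) a n + count_range (fun r => below x (f r)) a n
   = count_range (fun r => below y (f r)) a n)%nat.
Proof.
  intro Hxy. induction n as [|n IH]; [reflexivity|]. simpl. rewrite <- IH.
  unfold in_window, below.
  destruct (Rle_dec x (f (a + n)%nat)), (Rlt_dec (f (a + n)%nat) y),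
    (Rlt_dec (f (a + n)%nat) x); try lra; lia.
Qed.

(* * Aligned dyadic blocks *)

Lemma INR_pow2 k : INR (2 ^ k) = 2 ^ k.
Proof. rewrite pow_INR. now replace (INR 2) with 2 by (simpl; ring). Qed.

Definition count_below (k : nat) (c t : R) : nat :=
  count_range (fun r => below t (psi r + c / 2 ^ k)) 0 (2 ^ k).

(* Even indices fill [0,1/2) and odd ones [1/2,1), each a half-scale copy. *)
Lemma count_below_succ k c t :
  count_below (S k) c t = (count_below k c (2 * t) + count_below k c (2 * t - 1))%nat.
Proof.
  unfold count_below. rewrite Nat.pow_succ_r', count_range_parity.
  assert (0 < 2 ^ k) by (apply pow_lt; lra).
  replace (c / 2 ^ S k) with ((c / 2 ^ k) / 2) by (simpl; field; lra).
  f_equal; apply count_range_reindex; intros r _; rewrite Nat.add_0_l; unfold below.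
  - rewrite psi_even. destruct (Rlt_dec _ t), (Rlt_dec _ (2 * t)); auto; lra.
  - rewrite psi_odd. destruct (Rlt_dec _ t), (Rlt_dec _ (2 * t - 1)); auto; lra.
Qed.

Lemma count_below_spec k c : 0 <= c < 1 -> forall t,
  (t <= 0 -> count_below k c t = 0%nat) /\
  (1 <= t -> count_below k c t = (2 ^ k)%nat) /\
  (0 <= t <= 1 -> 2 ^ k * t - c <= INR (count_below k c t) < 2 ^ k * t - c + 1).
Proof.
  intro Hc. induction k as [|k IH]; intro t.
  - unfold count_below. simpl. unfold below. replace (0 + c / 1) with c by field.
    destruct (Rlt_dec c t); simpl; repeat split; intros; lra.
  - rewrite count_below_succ.
    destruct (IH (2 * t)) as [A0 [A1 A]]. destruct (IH (2 * t - 1)) as [B0 [B1 B]].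
    assert (0 < 2 ^ k) by (apply pow_lt; lra).
    replace (2 ^ S k) with (2 * 2 ^ k) by (simpl; ring).
    rewrite Nat.pow_succ_r'.
    split; [|split]; intros Ht.
    + rewrite A0, B0 by lra. reflexivity.
    + rewrite A1, B1 by lra. lia.
    + (* for t <= 1/2 no odd index counts, otherwise every even index does *)
      destruct (Rle_dec t (1/2)).
      * rewrite B0, Nat.add_0_r by lra. pose proof (A ltac:(lra)); lra.
      * rewrite A1, plus_INR, INR_pow2 by lra. pose proof (B ltac:(lra)); lra.
Qed.

(* * Dyadic decomposition of an additive window function *)

Section DyadicDecomposition.

Variable D : nat -> nat -> R.
Hypothesis D_app : forall a n1 n2, D a (n1 + n2) = D a n1 + D (a + n1) n2.
Hypothesis D_block : forall m k, Rabs (D (m * 2 ^ k) (2 ^ k)) < 1.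

Lemma D_empty a : D a 0 = 0.
Proof. pose proof (D_app a 0 0) as E. rewrite !Nat.add_0_r in E. lra. Qed.

(* A window shorter than [2^k] ending at a multiple of [2^k] is a union of at
   most one aligned block of each size [2^j], j < k. *)
Lemma D_suffix_aligned k : forall e a n,
  (n < 2 ^ k)%nat -> (a + n = e * 2 ^ k)%nat -> Rabs (D a n) <= INR k.
Proof.
  induction k as [|k IH]; intros e a n Hn Ha.
  - simpl in Hn. replace n with 0%nat by lia. rewrite D_empty, Rabs_R0. simpl; lra.
  - rewrite Nat.pow_succ_r' in Hn, Ha. rewrite S_INR.
    pose proof (Nat.pow_nonzero 2 k ltac:(lia)).
    destruct (Nat.lt_ge_cases n (2 ^ k)) as [Hl|Hl].
    + pose proof (IH (2 * e)%nat a n Hl ltac:(lia)). lra.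
    + replace n with ((n - 2 ^ k) + 2 ^ k)%nat by lia. rewrite D_app.
      pose proof (IH (2 * e - 1)%nat a (n - 2 ^ k)%nat ltac:(lia) ltac:(nia)).
      replace (a + (n - 2 ^ k))%nat with ((2 * e - 1) * 2 ^ k)%nat by nia.
      pose proof (D_block (2 * e - 1) k).
      eapply Rle_trans; [apply Rabs_triang|]. lra.
Qed.

Lemma D_prefix_aligned k : forall e a n,
  (n < 2 ^ k)%nat -> (a = e * 2 ^ k)%nat -> Rabs (D a n) <= INR k.
Proof.
  induction k as [|k IH]; intros e a n Hn Ha.
  - simpl in Hn. replace n with 0%nat by lia. rewrite D_empty, Rabs_R0. simpl; lra.
  - rewrite Nat.pow_succ_r' in Hn, Ha. rewrite S_INR.
    pose proof (Nat.pow_nonzero 2 k ltac:(lia)).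
    destruct (Nat.lt_ge_cases n (2 ^ k)) as [Hl|Hl].
    + pose proof (IH (2 * e)%nat a n Hl ltac:(lia)). lra.
    + replace n with (2 ^ k + (n - 2 ^ k))%nat by lia. rewrite D_app.
      pose proof (IH (2 * e + 1)%nat (a + 2 ^ k)%nat (n - 2 ^ k)%nat ltac:(lia) ltac:(nia)).
      replace a with ((2 * e) * 2 ^ k)%nat at 1 by nia.
      pose proof (D_block (2 * e) k).
      eapply Rle_trans; [apply Rabs_triang|]. lra.
Qed.

(* Cut [a, a+n) at the first multiple of [2^(lg n)]: the left part ends aligned,
   the right part is at most one aligned block plus an aligned prefix. *)
Theorem D_bound a n : (0 < n)%nat -> Rabs (D a n) < 2 * INR (Nat.log2 n) + 2.
Proof.
  intro Hn. destruct (Nat.log2_spec n Hn) as [Hlo Hhi].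
  set (k := Nat.log2 n) in *. set (P := (2 ^ k)%nat) in *.
  assert (HP : (0 < P)%nat) by (apply Nat.neq_0_lt_0, Nat.pow_nonzero; lia).
  rewrite Nat.pow_succ_r' in Hhi.
  set (e := ((a + P - 1) / P)%nat).
  pose proof (Nat.div_mod (a + P - 1) P ltac:(lia)) as Ediv.
  pose proof (Nat.mod_upper_bound (a + P - 1) P ltac:(lia)).
  fold e in Ediv.
  set (n1 := (e * P - a)%nat).
  assert (Hn1 : (n1 < P)%nat /\ (a + n1 = e * P)%nat) by (unfold n1; lia).
  destruct Hn1 as [Hn1 Ha1].
  replace n with (n1 + (n - n1))%nat by lia. rewrite D_app.
  pose proof (D_suffix_aligned k e a n1 Hn1 Ha1) as Hleft.
  assert (Hright : Rabs (D (a + n1) (n - n1)) < INR k + 1).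
  { destruct (Nat.lt_ge_cases (n - n1) P) as [Hl|Hl].
    - pose proof (D_prefix_aligned k e (a + n1) (n - n1) Hl Ha1). lra.
    - replace (n - n1)%nat with (P + (n - n1 - P))%nat by lia. rewrite D_app.
      pose proof (D_prefix_aligned k (S e) (a + n1 + P) (n - n1 - P)
                    ltac:(lia) ltac:(lia)).
      pose proof (D_block e k) as Hb. fold P in Hb. rewrite <- Ha1 in Hb.
      eapply Rle_lt_trans; [apply Rabs_triang|]. lra. }
  eapply Rle_lt_trans; [apply Rabs_triang|]. lra.
Qed.

End DyadicDecomposition.

(* * The van der Corput discrepancy *)

Section Discrepancy.

Variables x y : R.
Hypothesis Hx : 0 <= x.
Hypothesis Hxy : x < y.
Hypothesis Hy : y < 1.

Definition hit (i : nat) : bool := in_window x y (psi i).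

Definition discrepancy (a n : nat) : R := INR (count_range hit a n) - INR n * (y - x).

Lemma discrepancy_app a n1 n2 :
  discrepancy a (n1 + n2) = discrepancy a n1 + discrepancy (a + n1) n2.
Proof. unfold discrepancy. rewrite count_range_app, !plus_INR. ring. Qed.

(* On the aligned block [m 2^k, (m+1) 2^k) the points are the first [2^k]
   points translated by [psi m / 2^k]; compare the counts below [y] and [x]. *)
Lemma discrepancy_block m k : Rabs (discrepancy (m * 2 ^ k) (2 ^ k)) < 1.
Proof.
  unfold discrepancy.
  rewrite (count_range_reindex _ (fun r => in_window x y (psi r + psi m / 2 ^ k)))
    by (intros r Hr; unfold hit; now rewrite psi_shift).
  pose proof (count_window_split (fun r => psi r + psi m / 2 ^ k) x y 0 (2 ^ k)
                (Rlt_le _ _ Hxy)) as Hsplit.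
  pose proof (psi_bounds m) as Hc.
  destruct (count_below_spec k (psi m) Hc x) as [_ [_ Hbx]].
  destruct (count_below_spec k (psi m) Hc y) as [_ [_ Hby]].
  specialize (Hbx ltac:(lra)). specialize (Hby ltac:(lra)).
  unfold count_below in Hbx, Hby. rewrite <- Hsplit, plus_INR in Hby.
  rewrite INR_pow2. apply Rabs_def1; lra.
Qed.

Lemma discrepancy_bound a n :
  (0 < n)%nat -> Rabs (discrepancy a n) < 2 * INR (Nat.log2 n) + 2.
Proof. apply D_bound; [exact discrepancy_app | exact discrepancy_block]. Qed.

(* The indices counted by [hit] list the points of [Phi[a, a+n)] in [x, y),
   without repetition since [psi] is injective. *)
Lemma enumerates_hits a n :
  enumerates (fun r => Phi a (a + n) r /\ x <= r < y) (map psi (filter hit (seq a n))).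
Proof.
  split.
  - apply NoDup_map_NoDup_ForallPairs; [intros i j _ _; apply psi_inj|].
    apply NoDup_filter, seq_NoDup.
  - intro r. rewrite in_map_iff. unfold hit, in_window, below. split.
    + intros [i [<- Hi]]. apply filter_In in Hi as [Hs Hp]. apply in_seq in Hs.
      destruct (Rle_dec x (psi i)), (Rlt_dec (psi i) y); try discriminate.
      split; [exists i; repeat split; lia | lra].
    + intros [[i [Hlo [Hhi ->]]] Hr]. exists i. split; [reflexivity|].
      apply filter_In. split; [apply in_seq; lia|].
      destruct (Rle_dec x (psi i)), (Rlt_dec (psi i) y); auto; lra.
Qed.

End Discrepancy.

Lemma enumerates_length (A : R -> Prop) l l' :
  enumerates A l -> enumerates A l' -> length l = length l'.
Proof.
  intros [Hnd Hl] [Hnd' Hl'].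
  apply Nat.le_antisymm; apply NoDup_incl_length; auto;
    intros r Hr; [apply Hl', Hl | apply Hl, Hl']; exact Hr.
Qed.

Theorem lemmaB5 (z0 z : nat) (x y : R) (l : list R) :
  (0 < z)%nat ->
  0 <= x -> x < y -> y < 1 ->
  enumerates (fun r => Phi z0 (z0 + z) r /\ x <= r < y) l ->
  Rabs (INR (length l) / INR z - (y - x)) <
    (2 * INR (Nat.log2 z) + 2) / INR z.
Proof.
  intros Hz Hx Hxy Hy Hl.
  assert (Hcount : length l = count_range (hit x y) z0 z).
  { rewrite (enumerates_length _ _ _ Hl (enumerates_hits x y z0 z)).
    now rewrite length_map, count_range_filter. }
  pose proof (discrepancy_bound x y Hx Hxy Hy z0 z Hz) as Hbound.
  unfold discrepancy in Hbound. rewrite <- Hcount in Hbound.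
  assert (Hzpos : 0 < INR z) by (apply lt_0_INR; lia).
  replace (INR (length l) / INR z - (y - x))
    with ((INR (length l) - INR z * (y - x)) / INR z) by (field; lra).
  unfold Rdiv. rewrite Rabs_mult, (Rabs_pos_eq (/ INR z)) by (left; apply Rinv_0_lt_compat; lra).
  apply Rmult_lt_compat_r; [apply Rinv_0_lt_compat; lra | exact Hbound].
Qed.
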